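(* Let $\{\triangleright\} \subseteq \sigma \subseteq \{\triangleright, ;, \wedge, \mathrm{upd}, \sqcup, \mathsf{D}, \mathsf{A}\}$. The class of $\sigma$-algebras that have a meet-complete representation by partial functions is not axiomatisable by any existential-universal-existential first-order theory.
   Context: The operations are interpreted on partial functions on a base set $X$ as: $f \triangleright g = \{(x,y) \in g : x \notin \mathrm{dom}(f)\}$ (antidomain restriction); $f;g = \{(x,z):\exists y\,((x,y)\in f,(y,z)\in g)\}$ (composition); $f\wedge g = f\cap g$; $\mathrm{upd}(f,g)(x)$ is $f(x)$ if $f(x)$ defined and $g(x)$ undefined, $g(x)$ if both defined, undefined otherwise (update); $(f\sqcup g)(x)$ is $f(x)$ if defined, else $g(x)$ (preferential union); $\mathsf{D}(f)$ = identity on $\mathrm{dom}(f)$; $\mathsf{A}(f)$ = identity on $X\setminus\mathrm{dom}(f)$. A representation by partial functions is an isomorphism onto a $\sigma$-algebra of partial functions with these operations. Define $0 := a\triangleright a$, $a\lhd b := (a\triangleright b)\triangleright b$, $a \le b :\iff a\lhd b = a$; for representable algebras this is a partial order and $a\le b\iff\theta(a)\subseteq\theta(b)$. A representation $\theta$ is meet complete if for every nonempty $S$ with $\bigwedge S$ existing in $(\mathcal{A},\le)$, $\theta(\bigwedge S)=\bigcap\theta[S]$. *)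

From Stdlib Require Import List.

Inductive binop : Type :=
  | Antidom   (* f ▷ g : antidomain restriction *)
  | Comp
  | Meet
  | Upd
  | Pref.     (* f ⊔ g : preferential union *)

Inductive unop : Type :=
  | Dom
  | Antid.

Record signature : Type := Sig {
  sig_bin : binop -> bool;
  sig_un  : unop -> bool }.

(* A structure interpreting the symbols; for a signature σ only the symbols
   of σ are ever used (by formulas and representations), so a σ-algebra is
   such a structure up to the irrelevant interpretation of symbols outside σ. *)
Record algebra : Type := Alg {
  carrier :> Type;
  bin : binop -> carrier -> carrier -> carrier;
  un  : unop -> carrier -> carrier }.

Inductive term : Type :=
  | Var : nat -> term
  | TBin : binop -> term -> term -> term
  | TUn : unop -> term -> term.

Inductive formula : Type :=
  | FEq : term -> term -> formula
  | FFalse : formula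
  | FNot : formula -> formula
  | FAnd : formula -> formula -> formula
  | FOr : formula -> formula -> formula
  | FImp : formula -> formula -> formula
  | FEx : nat -> formula -> formula
  | FAll : nat -> formula -> formula.

Fixpoint term_in_sig (s : signature) (t : term) : Prop :=
  match t with
  | Var _ => True
  | TBin b t1 t2 => sig_bin s b = true /\ term_in_sig s t1 /\ term_in_sig s t2
  | TUn u t1 => sig_un s u = true /\ term_in_sig s t1
  end.

Fixpoint formula_in_sig (s : signature) (f : formula) : Prop :=
  match f with
  | FEq t1 t2 => term_in_sig s t1 /\ term_in_sig s t2
  | FFalse => True
  | FNot g => formula_in_sig s g
  | FAnd g h | FOr g h | FImp g h => formula_in_sig s g /\ formula_in_sig s h
  | FEx _ g | FAll _ g => formula_in_sig s g
  end.

Fixpoint term_has_var (n : nat) (t : term) : Prop :=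
  match t with
  | Var m => m = n
  | TBin _ t1 t2 => term_has_var n t1 \/ term_has_var n t2
  | TUn _ t1 => term_has_var n t1
  end.

Fixpoint free_in (n : nat) (f : formula) : Prop :=
  match f with
  | FEq t1 t2 => term_has_var n t1 \/ term_has_var n t2
  | FFalse => False
  | FNot g => free_in n g
  | FAnd g h | FOr g h | FImp g h => free_in n g \/ free_in n h
  | FEx m g | FAll m g => m <> n /\ free_in n g
  end.

Definition sentence (f : formula) : Prop := forall n, ~ free_in n f.

Fixpoint quantifier_free (f : formula) : Prop :=
  match f with
  | FEq _ _ | FFalse => True
  | FNot g => quantifier_free g
  | FAnd g h | FOr g h | FImp g h => quantifier_free g /\ quantifier_free h
  | FEx _ _ | FAll _ _ => False
  end.

Inductive is_E : formula -> Prop :=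
  | E_qf : forall f, quantifier_free f -> is_E f
  | E_ex : forall n f, is_E f -> is_E (FEx n f).

Inductive is_AE : formula -> Prop :=
  | AE_E : forall f, is_E f -> is_AE f
  | AE_all : forall n f, is_AE f -> is_AE (FAll n f).

Inductive is_EAE : formula -> Prop :=
  | EAE_AE : forall f, is_AE f -> is_EAE f
  | EAE_ex : forall n f, is_EAE f -> is_EAE (FEx n f).

Definition update {A : Type} (v : nat -> A) (n : nat) (a : A) : nat -> A :=
  fun m => if Nat.eqb m n then a else v m.

Fixpoint eval_term (M : algebra) (v : nat -> M) (t : term) : M :=
  match t with
  | Var n => v n
  | TBin b t1 t2 => bin M b (eval_term M v t1) (eval_term M v t2)
  | TUn u t1 => un M u (eval_term M v t1)
  end.

Fixpoint sat (M : algebra) (v : nat -> M) (f : formula) : Prop :=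
  match f with
  | FEq t1 t2 => eval_term M v t1 = eval_term M v t2
  | FFalse => False
  | FNot g => ~ sat M v g
  | FAnd g h => sat M v g /\ sat M v h
  | FOr g h => sat M v g \/ sat M v h
  | FImp g h => sat M v g -> sat M v h
  | FEx n g => exists a : M, sat M (update v n a) g
  | FAll n g => forall a : M, sat M (update v n a) g
  end.

Definition models (M : algebra) (f : formula) : Prop :=
  forall v : nat -> M, sat M v f.

Definition prel (X : Type) := X -> X -> Prop.

Definition functional {X : Type} (f : prel X) : Prop :=
  forall x y z, f x y -> f x z -> y = z.

Definition rel_eq {X : Type} (f g : prel X) : Prop :=
  forall x y, f x y <-> g x y.

Definition in_dom {X : Type} (f : prel X) (x : X) : Prop := exists y, f x y.

Definition pf_bin {X : Type} (b : binop) (f g : prel X) : prel X :=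
  match b with
  | Antidom => fun x y => g x y /\ ~ in_dom f x
  | Comp => fun x z => exists y, f x y /\ g y z
  | Meet => fun x y => f x y /\ g x y
  | Upd => fun x y => (f x y /\ ~ in_dom g x) \/ (g x y /\ in_dom f x)
  | Pref => fun x y => f x y \/ (g x y /\ ~ in_dom f x)
  end.

Definition pf_un {X : Type} (u : unop) (f : prel X) : prel X :=
  match u with
  | Dom => fun x y => x = y /\ in_dom f x
  | Antid => fun x y => x = y /\ ~ in_dom f x
  end.

Definition representation (s : signature) (M : algebra) (X : Type)
    (theta : M -> prel X) : Prop :=
  (forall a, functional (theta a)) /\
  (forall a b, rel_eq (theta a) (theta b) -> a = b) /\
  (forall o a b, sig_bin s o = true ->
       rel_eq (theta (bin M o a b)) (pf_bin o (theta a) (theta b))) /\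
  (forall o a, sig_un s o = true ->
       rel_eq (theta (un M o a)) (pf_un o (theta a))).

(* derived order: a ◁ b := (a ▷ b) ▷ b ; a ≤ b iff a ◁ b = a *)
Definition alg_le (M : algebra) (a b : M) : Prop :=
  bin M Antidom (bin M Antidom a b) b = a.

Definition is_glb (M : algebra) (S : M -> Prop) (m : M) : Prop :=
  (forall s, S s -> alg_le M m s) /\
  (forall l, (forall s, S s -> alg_le M l s) -> alg_le M l m).

Definition meet_complete (M : algebra) (X : Type) (theta : M -> prel X) : Prop :=
  forall (S : M -> Prop) (m : M), (exists s, S s) -> is_glb M S m ->
    forall x y, theta m x y <-> (forall s, S s -> theta s x y).

Definition has_meet_complete_rep (s : signature) (M : algebra) : Prop :=
  exists (X : Type) (theta : M -> prel X),
    representation s M X theta /\ meet_complete M X theta.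

(* Take two algebras of sets, read as algebras of partial identities (▷ is
   difference, ; and ∧ are intersection, upd(a,b) = a, ⊔ is union, D is the
   identity and A is complement):
     M = subsets of ℕ ∪ {∞}, eventually constant with limit their value at ∞;
     N = subsets of ℕ ⊎ 2^ℕ, eventually constant on ℕ and clopen on 2^ℕ.
   (1) M is meet-completely represented by partial identities on ℕ.
   (2) N has no meet-complete representation θ: for (x,y) ∈ θ(2^ℕ), the elements
       whose image contains (x,y) have meet 0 in N, while the intersection of
       their images contains (x,y).
   (3) Pulling back along ℕ ⊎ 2^ℕ → ℕ ∪ {∞} (collapsing 2^ℕ to ∞) gives
       i : M → N, and the embeddings k_J : M → N (pull-backs along a bijection
       of ℕ ⊎ {first J bits} onto ℕ) agree with i on any finite part of M while
       covering any finite part of N.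
   (4) For such an i, every ∃∀∃ sentence true in M is true in N.
   An ∃∀∃ axiomatisation would hold in M by (1), hence in N by (3) and (4),
   contradicting (2). *)

From Stdlib Require Import Arith Lia.
From Stdlib Require Import ProofIrrelevance FunctionalExtensionality PropExtensionality Classical.

Fixpoint term_bound (t : term) : nat :=
  match t with
  | Var n => S n
  | TBin _ t1 t2 => Nat.max (term_bound t1) (term_bound t2)
  | TUn _ t1 => term_bound t1
  end.

Fixpoint formula_bound (f : formula) : nat :=
  match f with
  | FEq t1 t2 => Nat.max (term_bound t1) (term_bound t2)
  | FFalse => 0
  | FNot g => formula_bound g
  | FAnd g h | FOr g h | FImp g h => Nat.max (formula_bound g) (formula_bound h)
  | FEx n g | FAll n g => Nat.max (S n) (formula_bound g)
  end.

Lemma term_var_lt_bound t : forall j, term_has_var j t -> j < term_bound t.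
Proof.
  induction t as [n | b t1 IH1 t2 IH2 | u t1 IH]; simpl; intros j H.
  - lia.
  - destruct H as [H | H]; [apply IH1 in H | apply IH2 in H]; lia.
  - exact (IH j H).
Qed.

Lemma free_var_lt_bound f : forall j, free_in j f -> j < formula_bound f.
Proof.
  induction f as [t1 t2 | | g IH | g IHg h IHh | g IHg h IHh | g IHg h IHh | n g IH | n g IH];
    cbn [free_in formula_bound]; intros j H.
  - destruct H as [H | H]; apply term_var_lt_bound in H; lia.
  - contradiction.
  - exact (IH j H).
  - destruct H as [H | H]; [apply IHg in H | apply IHh in H]; lia.
  - destruct H as [H | H]; [apply IHg in H | apply IHh in H]; lia.
  - destruct H as [H | H]; [apply IHg in H | apply IHh in H]; lia.
  - destruct H as [_ H]; apply IH in H; lia.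
  - destruct H as [_ H]; apply IH in H; lia.
Qed.

Lemma eval_term_agree (M : algebra) t : forall v w : nat -> M,
  (forall j, term_has_var j t -> v j = w j) -> eval_term M v t = eval_term M w t.
Proof.
  induction t as [n | b t1 IH1 t2 IH2 | u t1 IH]; simpl; intros v w Hvw.
  - apply Hvw; reflexivity.
  - rewrite (IH1 v w), (IH2 v w) by auto; reflexivity.
  - rewrite (IH v w Hvw); reflexivity.
Qed.

Lemma update_agree {A : Type} (P : nat -> Prop) n (v w : nat -> A) a :
  (forall j, n <> j /\ P j -> v j = w j) ->
  forall j, P j -> update v n a j = update w n a j.
Proof.
  intros Hvw j Hj; unfold update.
  destruct (Nat.eqb_spec j n) as [-> | Hne]; [reflexivity |].
  apply Hvw; split; [congruence | exact Hj].
Qed.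

Lemma sat_agree (M : algebra) f : forall v w : nat -> M,
  (forall j, free_in j f -> v j = w j) -> (sat M v f <-> sat M w f).
Proof.
  induction f as [t1 t2 | | g IH | g IHg h IHh | g IHg h IHh | g IHg h IHh | n g IH | n g IH];
    simpl; intros v w Hvw.
  - rewrite (eval_term_agree M t1 v w), (eval_term_agree M t2 v w) by auto; tauto.
  - tauto.
  - rewrite (IH v w Hvw); tauto.
  - rewrite (IHg v w), (IHh v w) by auto; tauto.
  - rewrite (IHg v w), (IHh v w) by auto; tauto.
  - rewrite (IHg v w), (IHh v w) by auto; tauto.
  - assert (K : forall a, sat M (update v n a) g <-> sat M (update w n a) g)
      by (intro a; apply IH, update_agree, Hvw).
    split; intros [a Ha]; exists a; apply K, Ha.
  - assert (K : forall a, sat M (update v n a) g <-> sat M (update w n a) g)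
      by (intro a; apply IH, update_agree, Hvw).
    split; intros Ha a; apply K, Ha.
Qed.

Definition embedding (M N : algebra) (k : M -> N) : Prop :=
  (forall a b, k a = k b -> a = b) /\
  (forall o a b, k (bin M o a b) = bin N o (k a) (k b)) /\
  (forall o a, k (un M o a) = un N o (k a)).

Lemma eval_term_embedding (M N : algebra) (k : M -> N) (v : nat -> M) t :
  embedding M N k -> eval_term N (fun j => k (v j)) t = k (eval_term M v t).
Proof.
  intros [_ [Hbin Hun]]; induction t as [n | b t1 IH1 t2 IH2 | u t1 IH]; simpl.
  - reflexivity.
  - rewrite IH1, IH2, Hbin; reflexivity.
  - rewrite IH, Hun; reflexivity.
Qed.

Lemma sat_qf_embedding (M N : algebra) (k : M -> N) : embedding M N k ->
  forall f, quantifier_free f ->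
  forall v, sat N (fun j => k (v j)) f <-> sat M v f.
Proof.
  intros Hk f;
    induction f as [t1 t2 | | g IH | g IHg h IHh | g IHg h IHh | g IHg h IHh | n g IH | n g IH];
    simpl; intros Hqf v.
  - rewrite !(eval_term_embedding M N k v) by exact Hk.
    split; [apply (proj1 Hk) | intros ->; reflexivity].
  - tauto.
  - rewrite (IH Hqf v); tauto.
  - destruct Hqf as [Hg Hh]; rewrite (IHg Hg v), (IHh Hh v); tauto.
  - destruct Hqf as [Hg Hh]; rewrite (IHg Hg v), (IHh Hh v); tauto.
  - destruct Hqf as [Hg Hh]; rewrite (IHg Hg v), (IHh Hh v); tauto.
  - contradiction.
  - contradiction.
Qed.

Lemma update_map {A B : Type} (k : A -> B) (v : nat -> A) n a :
  update (fun j => k (v j)) n (k a) = (fun j => k (update v n a j)).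
Proof.
  apply functional_extensionality; intro j; unfold update; destruct (Nat.eqb j n); reflexivity.
Qed.

Lemma sat_E_embedding (M N : algebra) (k : M -> N) : embedding M N k ->
  forall f, is_E f -> forall v, sat M v f -> sat N (fun j => k (v j)) f.
Proof.
  intros Hk f Hf; induction Hf as [f Hqf | n f Hf IH]; intros v Hv.
  - apply (sat_qf_embedding M N k Hk f Hqf v), Hv.
  - destruct Hv as [a Ha]; exists (k a); rewrite update_map; exact (IH _ Ha).
Qed.

Definition locally_covered (M N : algebra) (i : M -> N) : Prop :=
  forall (p : nat -> M) (q : nat -> N) (n : nat), exists k, embedding M N k /\
    (forall j, j < n -> k (p j) = i (p j)) /\
    (exists u : nat -> M, forall j, j < n -> k (u j) = q j).

Section Transfer.
Variables (M N : algebra) (i : M -> N).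
Hypothesis Hcov : locally_covered M N i.

(* Z collects the variables already bound universally: if f holds in M
   under every variation of v on Z, it holds in N under every w agreeing with i ∘ v off Z
   (on the relevant variables).  For the ∃ matrix, an embedding k that matches w is
   pulled back to an assignment of M, and the matrix is pushed forward along k. *)
Lemma sat_AE_transfer f : is_AE f ->
  forall n, formula_bound f <= n -> forall (Z : nat -> Prop) (v : nat -> M),
  (forall v', (forall j, ~ Z j -> v' j = v j) -> sat M v' f) ->
  forall w, (forall j, j < n -> ~ Z j -> w j = i (v j)) -> sat N w f.
Proof.
  intros Hf; induction Hf as [f Hf | m f Hf IH]; intros n Hn Z v Hv w Hw.
  - destruct (Hcov v w n) as [k [Hk [Hki [u Hu]]]].
    set (v' := fun j => if j <? n then u j else v j).
    assert (Hv' : sat M v' f).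
    { apply Hv; intros j HZ; unfold v'.
      destruct (Nat.ltb_spec j n) as [Hj | Hj]; [| reflexivity].
      apply (proj1 Hk); rewrite Hu, Hki by exact Hj; apply Hw; assumption. }
    apply (sat_agree N f (fun j => k (v' j)) w); [| exact (sat_E_embedding M N k Hk f Hf v' Hv')].
    intros j Hj; apply free_var_lt_bound in Hj; unfold v'.
    rewrite (proj2 (Nat.ltb_lt j n)) by lia; apply Hu; lia.
  - cbn [formula_bound] in Hn; simpl; intro b.
    apply (IH n ltac:(lia) (fun j => Z j \/ j = m) v).
    + intros v' Hv'.
      assert (Hvm : forall j, ~ Z j -> update v' m (v m) j = v j).
      { intros j HZ; unfold update; destruct (Nat.eqb_spec j m) as [-> | Hne]; [reflexivity |].
        apply Hv'; tauto. }
      specialize (Hv _ Hvm (v' m)); simpl in Hv.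
      replace (update (update v' m (v m)) m (v' m)) with v' in Hv; [exact Hv |].
      apply functional_extensionality; intro j; unfold update.
      destruct (Nat.eqb_spec j m) as [-> |]; reflexivity.
    + intros j Hj HZ; unfold update; destruct (Nat.eqb_spec j m) as [-> | Hne].
      * exfalso; apply HZ; right; reflexivity.
      * apply Hw; tauto.
Qed.

(* The outer existential witnesses are transported along i. *)
Lemma sat_EAE_transfer f : is_EAE f ->
  forall n, formula_bound f <= n -> forall v, sat M v f ->
  forall w, (forall j, j < n -> w j = i (v j)) -> sat N w f.
Proof.
  intros Hf; induction Hf as [f Hf | m f Hf IH]; intros n Hn v Hv w Hw.
  - apply (sat_AE_transfer f Hf n Hn (fun _ => False) v).
    + intros v' Hv'; replace v' with v; [exact Hv |].
      apply functional_extensionality; intro j; symmetry; apply Hv'; tauto.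
    + intros j Hj _; apply Hw, Hj.
  - cbn [formula_bound] in Hn; destruct Hv as [a Ha]; exists (i a).
    apply (IH n ltac:(lia) (update v m a) Ha).
    intros j Hj; unfold update; destruct (j =? m); [reflexivity | apply Hw, Hj].
Qed.

Lemma EAE_sentence_transfer f :
  inhabited M -> sentence f -> is_EAE f -> models M f -> models N f.
Proof.
  intros [a0] Hsen Hf HM w.
  apply (sat_agree N f (fun _ => i a0) w); [intros j Hj; contradiction (Hsen j) |].
  exact (sat_EAE_transfer f Hf _ (le_n _) _ (HM (fun _ => a0)) _ (fun _ _ => eq_refl)).
Qed.

End Transfer.

(* The operations on partial identities, expressed on their domains. *)
Definition set_bin {T : Type} (b : binop) (A B : T -> Prop) : T -> Prop :=
  match b with
  | Antidom => fun z => B z /\ ~ A z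
  | Comp | Meet => fun z => A z /\ B z
  | Upd => A
  | Pref => fun z => A z \/ B z
  end.

Definition set_un {T : Type} (u : unop) (A : T -> Prop) : T -> Prop :=
  match u with
  | Dom => A
  | Antid => fun z => ~ A z
  end.

Section SetAlgebra.
Variables (T : Type) (good : (T -> Prop) -> Prop).
Hypothesis good_bin : forall b A B, good A -> good B -> good (set_bin b A B).
Hypothesis good_un : forall u A, good A -> good (set_un u A).

Definition set_algebra : algebra :=
  {| carrier := {A : T -> Prop | good A};
     bin := fun b a c => exist _ (set_bin b (proj1_sig a) (proj1_sig c))
                               (good_bin b _ _ (proj2_sig a) (proj2_sig c));
     un := fun u a => exist _ (set_un u (proj1_sig a)) (good_un u _ (proj2_sig a)) |}.

Lemma set_ext (a b : set_algebra) :
  (forall z, proj1_sig a z <-> proj1_sig b z) -> a = b.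
Proof.
  destruct a as [A HA], b as [B HB]; simpl; intro HAB.
  assert (A = B) as <-
    by (apply functional_extensionality; intro z; apply propositional_extensionality, HAB).
  f_equal; apply proof_irrelevance.
Qed.

Lemma set_algebra_le (a b : set_algebra) :
  alg_le set_algebra a b <-> (forall z, proj1_sig a z -> proj1_sig b z).
Proof.
  unfold alg_le; split.
  - intros E z Hz; rewrite <- E in Hz; simpl in Hz; tauto.
  - intro Hab; apply set_ext; intro z; simpl.
    specialize (Hab z); destruct (classic (proj1_sig a z)); tauto.
Qed.

Variables (X : Type) (e : X -> T).

Definition pid_rep (a : set_algebra) : prel X :=
  fun x y => x = y /\ proj1_sig a (e x).

Lemma pid_rep_functional a : functional (pid_rep a).
Proof. intros x y z [<- _] [<- _]; reflexivity. Qed.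

Lemma pid_rep_dom a x : in_dom (pid_rep a) x <-> proj1_sig a (e x).
Proof. split; [intros [y [_ H]]; exact H | intro H; exists x; split; auto]. Qed.

Lemma pid_rep_bin o a b :
  rel_eq (pid_rep (bin set_algebra o a b)) (pf_bin o (pid_rep a) (pid_rep b)).
Proof.
  intros x y; destruct o; simpl; rewrite ?pid_rep_dom; unfold pid_rep; simpl.
  - tauto.
  - split; [intros [-> [Ha Hb]]; exists y; auto | intros [z [[<- Ha] [<- Hb]]]; auto].
  - tauto.
  - destruct (classic (proj1_sig b (e x))); tauto.
  - tauto.
Qed.

Lemma pid_rep_un o a : rel_eq (pid_rep (un set_algebra o a)) (pf_un o (pid_rep a)).
Proof. intros x y; destruct o; simpl; rewrite pid_rep_dom; unfold pid_rep; simpl; tauto. Qed.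

(* If good sets stay good when a point of the image of e is added, the representation
   is meet complete: a point common to all members of S could be added to their meet. *)
Lemma pid_rep_meet_complete :
  (forall A x, good A -> good (fun z => A z \/ z = e x)) ->
  meet_complete set_algebra X pid_rep.
Proof.
  intros good_add S m [s0 Hs0] [Hlow Hgreatest] x y; unfold pid_rep; split.
  - intros [<- Hm] s Hs; split; [reflexivity |].
    exact (proj1 (set_algebra_le m s) (Hlow s Hs) _ Hm).
  - intros Hall; destruct (Hall s0 Hs0) as [<- _]; split; [reflexivity |].
    apply NNPP; intro Hm.
    set (l := exist good _ (good_add _ x (proj2_sig m)) : set_algebra).
    assert (Hl : alg_le set_algebra l m).
    { apply Hgreatest; intros s Hs; apply set_algebra_le; intros z [Hz | ->].
      - exact (proj1 (set_algebra_le m s) (Hlow s Hs) z Hz).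
      - exact (proj2 (Hall s Hs)). }
    exact (Hm (proj1 (set_algebra_le l m) Hl (e x) (or_intror eq_refl))).
Qed.

End SetAlgebra.

Section PullBack.
Variables (T T' : Type) (good : (T -> Prop) -> Prop) (good' : (T' -> Prop) -> Prop).
Hypothesis good_bin : forall b A B, good A -> good B -> good (set_bin b A B).
Hypothesis good_un : forall u A, good A -> good (set_un u A).
Hypothesis good'_bin : forall b A B, good' A -> good' B -> good' (set_bin b A B).
Hypothesis good'_un : forall u A, good' A -> good' (set_un u A).
Variable r : T' -> T.
Hypothesis good_pull : forall A, good A -> good' (fun z => A (r z)).

Definition pullback (a : set_algebra T good good_bin good_un) :
    set_algebra T' good' good'_bin good'_un :=
  exist good' (fun z => proj1_sig a (r z)) (good_pull _ (proj2_sig a)).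

Lemma pullback_hom :
  (forall o a b, pullback (bin _ o a b) = bin _ o (pullback a) (pullback b)) /\
  (forall o a, pullback (un _ o a) = un _ o (pullback a)).
Proof. split; intros; apply set_ext; intro z; destruct o; simpl; tauto. Qed.

End PullBack.

Arguments pullback {T T' good good' good_bin good_un good'_bin good'_un} r good_pull a.

Section RepresentationFacts.
Variables (s : signature) (M : algebra) (X : Type) (theta : M -> prel X).
Hypothesis Hs : sig_bin s Antidom = true.
Hypothesis Hrep : representation s M X theta.

Lemma rep_antidom a b x y :
  theta (bin M Antidom a b) x y <-> theta b x y /\ ~ in_dom (theta a) x.
Proof. destruct Hrep as [_ [_ [Hbin _]]]; apply (Hbin Antidom a b Hs). Qed.

Lemma rep_le_incl a b x y : alg_le M a b -> theta a x y -> theta b x y.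
Proof. unfold alg_le; intros <- Ha; apply rep_antidom in Ha; tauto. Qed.

Lemma rep_zero_empty a x y : ~ theta (bin M Antidom a a) x y.
Proof. intros H; apply rep_antidom in H as [Ha Hnd]; apply Hnd; exists y; exact Ha. Qed.

End RepresentationFacts.

(* M: subsets of ℕ ∪ {∞} (∞ = None), eventually constant with limit their value at ∞. *)
Definition goodM (Y : option nat -> Prop) : Prop :=
  exists n, forall x, n <= x -> (Y (Some x) <-> Y None).

Lemma goodM_bin b Y Z : goodM Y -> goodM Z -> goodM (set_bin b Y Z).
Proof.
  intros [n1 H1] [n2 H2]; exists (n1 + n2); intros x Hx.
  specialize (H1 x ltac:(lia)); specialize (H2 x ltac:(lia)); destruct b; simpl; tauto.
Qed.

Lemma goodM_un u Y : goodM Y -> goodM (set_un u Y).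
Proof. intros [n H]; exists n; intros x Hx; specialize (H x Hx); destruct u; simpl; tauto. Qed.

Lemma goodM_add_point Y x : goodM Y -> goodM (fun z => Y z \/ z = Some x).
Proof.
  intros [n H]; exists (S (n + x)); intros x' Hx'; specialize (H x' ltac:(lia)).
  split; intros [Hz | Hz]; try (left; tauto); [injection Hz; lia | discriminate].
Qed.

Definition Malg : algebra := set_algebra (option nat) goodM goodM_bin goodM_un.

(* The representation of M by partial identities on ℕ; ∞ is recovered as a limit. *)
Definition thetaM : Malg -> prel nat := pid_rep _ _ goodM_bin goodM_un nat Some.

Lemma thetaM_injective a b : rel_eq (thetaM a) (thetaM b) -> a = b.
Proof.
  intros Hab.
  assert (Hfin : forall x, proj1_sig a (Some x) <-> proj1_sig b (Some x)).
  { intro x; specialize (Hab x x); unfold thetaM, pid_rep in Hab; simpl in Hab.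
    split; intro H; apply Hab; auto. }
  apply set_ext; intros [x |]; [apply Hfin |].
  destruct (proj2_sig a) as [n1 H1], (proj2_sig b) as [n2 H2].
  rewrite <- (H1 (n1 + n2)), <- (H2 (n1 + n2)) by lia; apply Hfin.
Qed.

Lemma M_has_meet_complete_rep s : has_meet_complete_rep s Malg.
Proof.
  exists nat, thetaM; split.
  - split; [apply pid_rep_functional |].
    split; [exact thetaM_injective |].
    split; intros; [apply pid_rep_bin | apply pid_rep_un].
  - apply pid_rep_meet_complete; intros Y x; apply goodM_add_point.
Qed.

(* N: subsets of ℕ ⊎ 2^ℕ eventually constant on ℕ and clopen on Cantor space 2^ℕ. *)
Definition PT : Type := (nat + (nat -> bool))%type.

Definition eventually_constant (U : nat -> Prop) : Prop :=
  exists n, forall x, n <= x -> (U x <-> U n).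

Definition finitely_determined (U : (nat -> bool) -> Prop) : Prop :=
  exists n, forall w w', (forall t, t < n -> w t = w' t) -> (U w <-> U w').

Definition goodN (U : PT -> Prop) : Prop :=
  eventually_constant (fun x => U (inl x)) /\ finitely_determined (fun w => U (inr w)).

Lemma goodN_bin b U V : goodN U -> goodN V -> goodN (set_bin b U V).
Proof.
  intros [[m1 HU1] [n1 HU2]] [[m2 HV1] [n2 HV2]]; split.
  - exists (m1 + m2); intros x Hx.
    pose proof (HU1 x ltac:(lia)); pose proof (HU1 (m1 + m2) ltac:(lia)).
    pose proof (HV1 x ltac:(lia)); pose proof (HV1 (m1 + m2) ltac:(lia)).
    destruct b; simpl; tauto.
  - exists (n1 + n2); intros w w' Hww'.
    pose proof (HU2 w w' ltac:(intros; apply Hww'; lia)).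
    pose proof (HV2 w w' ltac:(intros; apply Hww'; lia)).
    destruct b; simpl; tauto.
Qed.

Lemma goodN_un u U : goodN U -> goodN (set_un u U).
Proof.
  intros [[m HU1] [n HU2]]; split.
  - exists m; intros x Hx; pose proof (HU1 x Hx); pose proof (HU1 m (le_n m)).
    destruct u; simpl; tauto.
  - exists n; intros w w' Hww'; pose proof (HU2 w w' Hww'); destruct u; simpl; tauto.
Qed.

Definition Nalg : algebra := set_algebra PT goodN goodN_bin goodN_un.

Definition N_cantor : Nalg :=
  exist goodN (fun z => match z with inl _ => False | inr _ => True end)
    (conj (ex_intro _ 0 (fun _ _ => iff_refl False))
          (ex_intro _ 0 (fun _ _ _ => iff_refl True))).

Lemma good_cylinder n b : goodN (fun z => match z with inl _ => False | inr w => w n = b end).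
Proof.
  split; [exists 0; intros; reflexivity |].
  exists (S n); intros w w' Hww'; simpl; rewrite (Hww' n ltac:(lia)); reflexivity.
Qed.

Definition N_cylinder (n : nat) (b : bool) : Nalg := exist goodN _ (good_cylinder n b).

Definition N_zero : Nalg := bin Nalg Antidom N_cantor N_cantor.

Section NoMeetCompleteRep.
Variables (s : signature) (X : Type) (theta : Nalg -> prel X).
Hypothesis Hs : sig_bin s Antidom = true.
Hypothesis Hrep : representation s Nalg X theta.

(* If (x,y) ∈ θ(2^ℕ), any lower bound l of {a | (x,y) ∈ θ(a)} is empty: l ⊆ 2^ℕ, and a
   point w ∈ l with l determined by the first n bits is excluded by the cylinder
   c = {w' | w' n = w n}: if x ∈ dom θ(c) then c is in the family but l ⊄ c (flip bit n);
   otherwise c ▷ 2^ℕ is in the family and w ∉ c ▷ 2^ℕ. *)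
Lemma pair_stabiliser_lower_bound_empty x y (l : Nalg) :
  theta N_cantor x y -> (forall a, theta a x y -> alg_le Nalg l a) ->
  forall z, ~ proj1_sig l z.
Proof.
  intros Hxy Hl.
  assert (Hsub : forall a z, theta a x y -> proj1_sig l z -> proj1_sig a z)
    by (intros a z Ha; exact (proj1 (set_algebra_le _ _ _ _ l a) (Hl a Ha) z)).
  intros [n | w] Hw; [exact (Hsub N_cantor _ Hxy Hw) |].
  destruct (proj2_sig l) as [_ [nl Hnl]].
  set (c := N_cylinder nl (w nl)).
  destruct (classic (in_dom (theta c) x)) as [[y' Hy'] | Hnd].
  - assert (Hc : theta c x y).
    { assert (Hle : alg_le Nalg c N_cantor)
        by (apply set_algebra_le; intros [n | v] Hv; [destruct Hv | exact I]).
      pose proof (rep_le_incl s Nalg X theta Hs Hrep _ _ x y' Hle Hy') as Hy'cantor.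
      rewrite <- (proj1 Hrep N_cantor x y' y Hy'cantor Hxy); exact Hy'. }
    set (w' := fun t => if t =? nl then negb (w nl) else w t).
    assert (Hw' : proj1_sig l (inr w')).
    { apply (Hnl w' w); [| exact Hw].
      intros t Ht; unfold w'; destruct (Nat.eqb_spec t nl); [lia | reflexivity]. }
    pose proof (Hsub c _ Hc Hw') as Hcw'; simpl in Hcw'.
    unfold w' in Hcw'; rewrite Nat.eqb_refl in Hcw'; destruct (w nl); discriminate.
  - assert (Hcc : theta (bin Nalg Antidom c N_cantor) x y)
      by exact (proj2 (rep_antidom s Nalg X theta Hs Hrep c N_cantor x y) (conj Hxy Hnd)).
    exact (proj2 (Hsub _ _ Hcc Hw) eq_refl).
Qed.

End NoMeetCompleteRep.

(* Step (2): θ(2^ℕ) is nonempty by injectivity, and the family above has meet 0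
   while the intersection of its images contains (x,y). *)
Lemma N_no_meet_complete_rep s : sig_bin s Antidom = true -> ~ has_meet_complete_rep s Nalg.
Proof.
  intros Hs [X [theta [Hrep Hmc]]].
  assert (Hnonempty : exists x y, theta N_cantor x y).
  { apply NNPP; intro Hempty.
    assert (E : N_cantor = N_zero).
    { apply (proj1 (proj2 Hrep)); intros x y; split; intro H.
      - exfalso; eauto.
      - exfalso; exact (rep_zero_empty s Nalg X theta Hs Hrep _ x y H). }
    assert (Hin : proj1_sig N_zero (inr (fun _ => true))) by (rewrite <- E; exact I).
    exact (proj2 Hin I). }
  destruct Hnonempty as [x [y Hxy]].
  assert (Hglb : is_glb Nalg (fun a => theta a x y) N_zero).
  { split.
    - intros a _; apply set_algebra_le; intros z [Hz Hnz]; contradiction.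
    - intros l Hl; apply set_algebra_le; intros z Hz.
      exfalso; exact (pair_stabiliser_lower_bound_empty s X theta Hs Hrep x y l Hxy Hl z Hz). }
  apply (rep_zero_empty s Nalg X theta Hs Hrep N_cantor x y).
  exact (proj2 (Hmc _ _ (ex_intro _ N_cantor Hxy) Hglb x y) (fun a Ha => Ha)).
Qed.

Fixpoint code (J : nat) (w : nat -> bool) : nat :=
  match J with
  | 0 => 0
  | S J' => 2 * code J' (fun t => w (S t)) + Nat.b2n (w 0)
  end.

Lemma code_lt J : forall w, code J w < 2 ^ J.
Proof.
  induction J as [| J IH]; simpl; intro w; [lia |].
  pose proof (IH (fun t => w (S t))); pose proof (Nat.b2n_le_1 (w 0)); lia.
Qed.

Lemma code_ext J : forall w w', (forall t, t < J -> w t = w' t) -> code J w = code J w'.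
Proof.
  induction J as [| J IH]; simpl; intros w w' Hww'; [reflexivity |].
  rewrite (IH (fun t => w (S t)) (fun t => w' (S t))), (Hww' 0); [reflexivity | lia |].
  intros t Ht; apply Hww'; lia.
Qed.

Lemma testbit_code J : forall w t, t < J -> Nat.testbit (code J w) t = w t.
Proof.
  induction J as [| J IH]; intros w t Ht; [lia |].
  destruct t as [| t]; cbn [code].
  - apply Nat.testbit_0_r.
  - rewrite Nat.testbit_succ_r; apply (IH (fun t => w (S t))); lia.
Qed.

Lemma code_testbit J : forall n, n < 2 ^ J -> code J (Nat.testbit n) = n.
Proof.
  induction J as [| J IH]; cbn [code]; intros n Hn; [simpl in Hn; lia |].
  replace (fun t => Nat.testbit n (S t)) with (Nat.testbit (Nat.div2 n))
    by (apply functional_extensionality; intro t; apply Nat.testbit_div2).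
  rewrite IH, Nat.bit0_odd; [symmetry; apply Nat.div2_odd |].
  pose proof (Nat.div2_odd n); destruct (Nat.odd n); simpl in *; lia.
Qed.

(* A bijection of ℕ ⊎ (2^ℕ cut to its first J bits) onto ℕ: x < J is fixed, a bit
   sequence goes to J + its code, and x ≥ J to x + 2^J. *)
Definition flatten (J : nat) (z : PT) : nat :=
  match z with
  | inl x => if x <? J then x else x + 2 ^ J
  | inr w => J + code J w
  end.

Definition unflatten (J y : nat) : PT :=
  if y <? J then inl y
  else if y <? J + 2 ^ J then inr (Nat.testbit (y - J))
  else inl (y - 2 ^ J).

Lemma flatten_unflatten J y : flatten J (unflatten J y) = y.
Proof.
  unfold unflatten; destruct (Nat.ltb_spec y J); simpl.
  - rewrite (proj2 (Nat.ltb_lt y J)) by assumption; reflexivity.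
  - destruct (Nat.ltb_spec y (J + 2 ^ J)); simpl.
    + rewrite code_testbit; lia.
    + rewrite (proj2 (Nat.ltb_ge (y - 2 ^ J) J)) by lia; lia.
Qed.

Lemma unflatten_flatten_inl J x : unflatten J (flatten J (inl x)) = inl x.
Proof.
  unfold unflatten, flatten; destruct (Nat.ltb_spec x J).
  - rewrite (proj2 (Nat.ltb_lt x J)) by assumption; reflexivity.
  - rewrite (proj2 (Nat.ltb_ge (x + 2 ^ J) J)) by lia.
    rewrite (proj2 (Nat.ltb_ge (x + 2 ^ J) (J + 2 ^ J))) by lia.
    f_equal; lia.
Qed.

Lemma unflatten_flatten_inr J w : unflatten J (flatten J (inr w)) = inr (Nat.testbit (code J w)).
Proof.
  unfold unflatten, flatten; pose proof (code_lt J w).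
  rewrite (proj2 (Nat.ltb_ge (J + code J w) J)) by lia.
  rewrite (proj2 (Nat.ltb_lt (J + code J w) (J + 2 ^ J))) by lia.
  do 2 f_equal; lia.
Qed.

Definition r_inf (z : PT) : option nat :=
  match z with inl x => Some x | inr _ => None end.

Lemma good_pull_inf Y : goodM Y -> goodN (fun z => Y (r_inf z)).
Proof.
  intros [n H]; split.
  - exists n; intros x Hx; simpl; rewrite (H x Hx), (H n (le_n n)); reflexivity.
  - exists 0; intros; reflexivity.
Qed.

Definition iM : Malg -> Nalg := pullback r_inf good_pull_inf.

Lemma good_pull_flatten J Y : goodM Y -> goodN (fun z => Y (Some (flatten J z))).
Proof.
  intros [n H]; split.
  - exists (n + J); intros x Hx; simpl.
    rewrite (proj2 (Nat.ltb_ge x J)), (proj2 (Nat.ltb_ge (n + J) J)) by lia.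
    rewrite (H (x + 2 ^ J)), (H (n + J + 2 ^ J)) by lia; reflexivity.
  - exists J; intros w w' Hww'; simpl; rewrite (code_ext J w w' Hww'); reflexivity.
Qed.

Definition kJ (J : nat) : Malg -> Nalg :=
  pullback (fun z => Some (flatten J z)) (good_pull_flatten J).

Definition unpull (J : nat) (U : PT -> Prop) (y : option nat) : Prop :=
  match y with
  | Some y => U (unflatten J y)
  | None => exists n, forall x, n <= x -> U (inl x)
  end.

Lemma good_unpull J U : goodN U -> goodM (unpull J U).
Proof.
  intros [[n H] _]; exists (n + J + 2 ^ J); intros y Hy; simpl.
  unfold unflatten; rewrite (proj2 (Nat.ltb_ge y J)), (proj2 (Nat.ltb_ge y (J + 2 ^ J))) by lia.
  rewrite (H (y - 2 ^ J)) by lia; split.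
  - intro Hn; exists n; intros x Hx; rewrite (H x Hx); exact Hn.
  - intros [m Hm]; rewrite <- (H (m + n)) by lia; apply Hm; lia.
Qed.

Definition kJ_inv (J : nat) (U : Nalg) : Malg :=
  exist goodM (unpull J (proj1_sig U)) (good_unpull J _ (proj2_sig U)).

Lemma kJ_inv_kJ J Y : kJ_inv J (kJ J Y) = Y.
Proof.
  apply set_ext; intros [y |]; simpl.
  - rewrite flatten_unflatten; reflexivity.
  - destruct (proj2_sig Y) as [n H]; split.
    + intros [m Hm]; specialize (Hm (m + n + J) ltac:(lia)); simpl in Hm.
      rewrite (proj2 (Nat.ltb_ge (m + n + J) J)) in Hm by lia.
      rewrite <- (H (m + n + J + 2 ^ J)) by lia; exact Hm.
    + intro HY; exists (n + J); intros x Hx; simpl.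
      rewrite (proj2 (Nat.ltb_ge x J)), (H (x + 2 ^ J)) by lia; exact HY.
Qed.

Lemma kJ_kJ_inv J (U : Nalg) :
  (forall w w', (forall t, t < J -> w t = w' t) ->
     (proj1_sig U (inr w) <-> proj1_sig U (inr w'))) ->
  kJ J (kJ_inv J U) = U.
Proof.
  intros HU; apply set_ext; intros [x | w]; cbn [kJ kJ_inv pullback proj1_sig unpull].
  - rewrite unflatten_flatten_inl; reflexivity.
  - rewrite unflatten_flatten_inr; apply HU, testbit_code.
Qed.

Lemma kJ_embedding J : embedding Malg Nalg (kJ J).
Proof.
  split; [| apply pullback_hom].
  intros a b E; rewrite <- (kJ_inv_kJ J a), <- (kJ_inv_kJ J b), E; reflexivity.
Qed.

Lemma kJ_agrees_iM J (Y : Malg) :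
  (forall x, J <= x -> (proj1_sig Y (Some x) <-> proj1_sig Y None)) -> kJ J Y = iM Y.
Proof.
  intros HY; apply set_ext; intros [x | w]; simpl.
  - destruct (Nat.ltb_spec x J); [reflexivity |].
    rewrite (HY x), (HY (x + 2 ^ J)) by lia; reflexivity.
  - apply HY; lia.
Qed.

Lemma common_bound (P : nat -> nat -> Prop) :
  (forall j B B', B <= B' -> P j B -> P j B') ->
  forall n, (forall j, j < n -> exists B, P j B) -> exists B, forall j, j < n -> P j B.
Proof.
  intros Hmono n; induction n as [| n IH]; intros Hex.
  - exists 0; intros; lia.
  - destruct IH as [B1 H1]; [intros j Hj; apply Hex; lia |].
    destruct (Hex n ltac:(lia)) as [B2 H2]; exists (B1 + B2); intros j Hj.
    destruct (Nat.eq_dec j n) as [-> | Hne].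
    + apply (Hmono n B2); [lia | exact H2].
    + apply (Hmono j B1); [lia | apply H1; lia].
Qed.

(* Step (3): choose J beyond all the bounds of the finitely many given elements. *)
Lemma M_locally_covered_in_N : locally_covered Malg Nalg iM.
Proof.
  intros p q n.
  destruct (common_bound (fun j B =>
      (forall x, B <= x -> (proj1_sig (p j) (Some x) <-> proj1_sig (p j) None)) /\
      (forall w w', (forall t, t < B -> w t = w' t) ->
         (proj1_sig (q j) (inr w) <-> proj1_sig (q j) (inr w')))))
    with (n := n) as [B HB].
  - intros j B B' HBB' [Hp Hq]; split.
    + intros x Hx; apply Hp; lia.
    + intros w w' Hww'; apply Hq; intros t Ht; apply Hww'; lia.
  - intros j _.
    destruct (proj2_sig (p j)) as [a Ha], (proj2_sig (q j)) as [_ [b Hb]].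
    exists (a + b); split.
    + intros x Hx; apply Ha; lia.
    + intros w w' Hww'; apply Hb; intros t Ht; apply Hww'; lia.
  - exists (kJ B); split; [apply kJ_embedding |]; split.
    + intros j Hj; apply kJ_agrees_iM, (HB j Hj).
    + exists (fun j => kJ_inv B (q j)); intros j Hj; apply kJ_kJ_inv, (HB j Hj).
Qed.

Theorem proposition4p8 (s : signature) (Hs : sig_bin s Antidom = true) :
  ~ exists T : formula -> Prop,
      (forall f, T f -> sentence f /\ formula_in_sig s f /\ is_EAE f) /\
      (forall M : algebra, inhabited M ->
         ((forall f, T f -> models M f) <-> has_meet_complete_rep s M)).
Proof.
  intros [T [HT Haxioms]].
  set (M_empty := exist goodM (fun _ => False) (ex_intro _ 0 (fun _ _ => iff_refl False)) : Malg).
  assert (HM : forall f, T f -> models Malg f)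
    by exact (proj2 (Haxioms Malg (inhabits M_empty)) (M_has_meet_complete_rep s)).
  apply (N_no_meet_complete_rep s Hs), (Haxioms Nalg (inhabits N_cantor)).
  intros f Hf; destruct (HT f Hf) as [Hsen [_ HEAE]].
  exact (EAE_sentence_transfer Malg Nalg iM M_locally_covered_in_N f
           (inhabits M_empty) Hsen HEAE (HM f Hf)).
Qed.
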